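(* Let $\mathcal{B}=\bigcup_{s>0}\mathcal{B}_s$, where $\mathcal{B}_s$ is the set of irrational real numbers satisfying the one-dimensional Bruno-$s$ condition. Then $\mathcal{B}$ is invariant under the action of $PSL(2,\mathbb{Z})$: for all integers $a,b,c,d$ with $ad-bc=1$ and all $\omega\in\mathcal{B}$, $(a\omega+b)/(c\omega+d)\in\mathcal{B}$.
   Context: For an irrational real $\omega$, let $(q_j)_{j\ge0}$ be the denominators of the continued fraction convergents of $\omega$ (equivalently of its fractional part): $q_{-1}=0$, $q_0=1$, $q_{k+1}=a_{k+1}q_k+q_{k-1}$ with $(a_k)$ the partial quotients. $\omega$ satisfies the one-dimensional Bruno-$s$ condition ($s>0$) if $\limsup_{N\to+\infty}\big(\sum_{j=0}^{k(N)}\frac{\log q_{j+1}}{q_j}-s\log N\big)<+\infty$, where $k(N)$ is defined by $q_{k(N)}\le N<q_{k(N)+1}$. *)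

From Stdlib Require Import Reals Lra Lia ZArith.
Open Scope R_scope.

Definition irrational (w : R) : Prop :=
  ~ exists p q : Z, q <> 0%Z /\ w = IZR p / IZR q.

(* Gauss-map iterates: x_0 = {w}, x_{k+1} = {1/x_k}; so that
   w = a_0 + x_0 and x_k = 1/(a_{k+1} + x_{k+1}). *)
Fixpoint cf_rem (w : R) (k : nat) : R :=
  match k with
  | O => frac_part w
  | S k' => frac_part (/ cf_rem w k')
  end.

(* partial quotients a_{k+1} = floor (1 / x_k)  (k >= 0) *)
Definition cf_a (w : R) (k : nat) : Z :=
  match k with
  | O => Int_part w
  | S k' => Int_part (/ cf_rem w k')
  end.

(* (q_{k-1}, q_k), with q_{-1} = 0, q_0 = 1, q_{k+1} = a_{k+1} q_k + q_{k-1} *)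
Fixpoint cf_qpair (w : R) (k : nat) : Z * Z :=
  match k with
  | O => (0%Z, 1%Z)
  | S k' => let (qm, qk) := cf_qpair w k' in (qk, (cf_a w (S k') * qk + qm)%Z)
  end.

Definition cf_q (w : R) (k : nat) : Z := snd (cf_qpair w k).

Definition bruno_sum (w : R) (k : nat) : R :=
  sum_f_R0 (fun j => ln (IZR (cf_q w (S j))) / IZR (cf_q w j)) k.

(* one-dimensional Bruno-s condition:
   limsup_{N -> oo} ( bruno_sum w (k(N)) - s log N ) < +oo,
   where k(N) is the index with q_{k(N)} <= N < q_{k(N)+1}. *)
Definition bruno_cond (s : R) (w : R) : Prop :=
  exists (C : R) (N0 : nat), forall (N k : nat), (N0 <= N)%nat ->
    IZR (cf_q w k) <= INR N < IZR (cf_q w (S k)) ->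
    bruno_sum w k - s * ln (INR N) <= C.

Definition in_Bs (s w : R) : Prop := irrational w /\ bruno_cond s w.
Definition in_B (w : R) : Prop := exists s, 0 < s /\ in_Bs s w.

(** An irrational w lies in B iff its denominators satisfy a growth bound
    ln q_{k+1} <= q_k (s ln q_k + C) for all large k: one direction reads the
    bound off the last term of the Bruno sum at N = q_k, the other uses that
    the q_j grow at least like Fibonacci numbers, so that sum_j 1/q_j <= 5.
    If the Gauss-map orbits of w and w' meet, x_i(w) = x_j(w'), then w and w'
    share all later partial quotients, their denominators agree up to a
    bounded factor and the growth bound transfers from one to the other.
    Now x + n, -x and 1/x have the same tail as x, and Euclid's algorithm on
    the bottom row writes any x |-> (ax+b)/(cx+d) of PSL(2,Z) as a
    composite of these three maps. *)

From Stdlib Require Import Reals Lra Lia ZArith.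
Open Scope R_scope.

Lemma ln_le x y : 0 < x -> x <= y -> ln x <= ln y.
Proof.
  intros Hx [Hxy | <-]; [left; apply ln_increasing |]; lra.
Qed.

Lemma ln_nonneg x : 1 <= x -> 0 <= ln x.
Proof. intros; rewrite <- ln_1; apply ln_le; lra. Qed.

Lemma Rdiv_le_iff a b c : 0 < c -> a / c <= b <-> a <= c * b.
Proof.
  intros Hc; split; intros H.
  - replace a with (c * (a / c)) by (field; lra).
    apply Rmult_le_compat_l; lra.
  - apply Rmult_le_reg_l with c; [exact Hc |].
    replace (c * (a / c)) with a by (field; lra); exact H.
Qed.

Lemma frac_part_shift r n : IZR n <= r < IZR n + 1 -> frac_part r = r - IZR n.
Proof.
  intros H; symmetry; eapply proj2, (Int_part_frac_part_spec r n); lra.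
Qed.

Lemma frac_part_id r : 0 <= r < 1 -> frac_part r = r.
Proof. intros H; rewrite (frac_part_shift r 0); simpl; lra. Qed.

Lemma frac_part_add_IZR x n : frac_part (x + IZR n) = frac_part x.
Proof.
  destruct (base_Int_part x).
  rewrite (frac_part_shift _ (Int_part x + n)); rewrite ?plus_IZR.
  - unfold frac_part; ring.
  - lra.
Qed.

(** * Irrationality *)

Lemma irrational_neq0 x : irrational x -> x <> 0.
Proof. intros H ->; apply H; exists 0%Z, 1%Z; split; [lia | simpl; field]. Qed.

Lemma irrational_add_IZR x n : irrational x -> irrational (x + IZR n).
Proof.
  intros H [p [q [Hq E]]]; apply H.
  exists (p - n * q)%Z, q; split; [exact Hq |].
  apply not_0_IZR in Hq; rewrite minus_IZR, mult_IZR.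
  replace x with (x + IZR n - IZR n) by ring.
  rewrite E; field; exact Hq.
Qed.

Lemma irrational_opp x : irrational x -> irrational (- x).
Proof.
  intros H [p [q [Hq E]]]; apply H.
  exists (- p)%Z, q; split; [exact Hq |].
  apply not_0_IZR in Hq; rewrite opp_IZR.
  replace x with (- - x) by ring.
  rewrite E; field; exact Hq.
Qed.

Lemma irrational_inv x : irrational x -> irrational (/ x).
Proof.
  intros H [p [q [Hq E]]].
  assert (Hp : IZR p <> 0).
  { intros Hp; rewrite Hp in E; unfold Rdiv in E; rewrite Rmult_0_l in E.
    exact (Rinv_neq_0_compat x (irrational_neq0 x H) E). }
  apply H; exists q, p; split; [intros ->; exact (Hp eq_refl) |].
  apply not_0_IZR in Hq.
  rewrite <- (Rinv_inv x), E; field; split; assumption.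
Qed.

Lemma irrational_frac_part x : irrational x -> irrational (frac_part x).
Proof.
  intros H; unfold frac_part, Rminus; rewrite <- opp_IZR.
  apply irrational_add_IZR, H.
Qed.

Lemma irrational_frac_part_bounds x : irrational x -> 0 < frac_part x < 1.
Proof.
  intros H; destruct (base_fp x) as [[Hpos | Hzero] Hlt1]; [lra |].
  exfalso; destruct (fp_nat x Hzero) as [c Hc].
  apply H; exists c, 1%Z; split; [lia | rewrite Hc; simpl; field].
Qed.

Lemma affine_IZR_neq0 w c d :
  irrational w -> (c <> 0 \/ d <> 0)%Z -> IZR c * w + IZR d <> 0.
Proof.
  intros H Hcd E; destruct (Z.eq_dec c 0) as [-> | Hc].
  - destruct Hcd as [Hc | Hd]; [lia |].
    apply Hd, eq_IZR; simpl in E; lra.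
  - apply H; exists (- d)%Z, c; split; [exact Hc |].
    apply not_0_IZR in Hc; rewrite opp_IZR.
    apply (Rmult_eq_reg_l (IZR c)); [field_simplify; lra | exact Hc].
Qed.

(** * Continued fraction denominators *)

Local Notation qR w k := (IZR (cf_q w k)).

Lemma cf_rem_irrational w k : irrational w -> irrational (cf_rem w k).
Proof.
  intros H; induction k as [| k IH]; simpl; apply irrational_frac_part;
    [exact H | exact (irrational_inv _ IH)].
Qed.

Lemma cf_rem_bounds w k : irrational w -> 0 < cf_rem w k < 1.
Proof.
  intros H; destruct k as [| k]; simpl; apply irrational_frac_part_bounds;
    [exact H | exact (irrational_inv _ (cf_rem_irrational w k H))].
Qed.

Lemma cf_a_pos w k : irrational w -> (1 <= cf_a w (S k))%Z.
Proof.
  intros H; destruct (cf_rem_bounds w k H).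
  assert (Hinv : 1 < / cf_rem w k).
  { rewrite <- Rinv_1; apply Rinv_lt_contravar; lra. }
  destruct (base_Int_part (/ cf_rem w k)).
  enough (0 < Int_part (/ cf_rem w k))%Z by (simpl; lia).
  apply lt_IZR; lra.
Qed.

Lemma cf_qpair_S w k :
  cf_qpair w (S k) = (cf_q w k, (cf_a w (S k) * cf_q w k + fst (cf_qpair w k))%Z).
Proof. unfold cf_q; simpl; destruct (cf_qpair w k); reflexivity. Qed.

Lemma cf_q_S w k : cf_q w (S k) = (cf_a w (S k) * cf_q w k + fst (cf_qpair w k))%Z.
Proof. unfold cf_q at 1; rewrite cf_qpair_S; reflexivity. Qed.

Lemma cf_q_SS w k : cf_q w (S (S k)) = (cf_a w (S (S k)) * cf_q w (S k) + cf_q w k)%Z.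
Proof. rewrite cf_q_S, cf_qpair_S; reflexivity. Qed.

Lemma cf_qpair_bounds w k : irrational w ->
  (0 <= fst (cf_qpair w k) <= cf_q w k /\ 1 <= cf_q w k)%Z.
Proof.
  intros H; induction k as [| k IH]; [unfold cf_q; simpl; lia |].
  rewrite cf_q_S, cf_qpair_S; cbn [fst].
  pose proof (cf_a_pos w k H); nia.
Qed.

Lemma cf_q_pos w k : irrational w -> (1 <= cf_q w k)%Z.
Proof. intros H; apply (cf_qpair_bounds w k H). Qed.

Lemma cf_qR_ge1 w k : irrational w -> 1 <= qR w k.
Proof. intros H; apply IZR_le, cf_q_pos, H. Qed.

Lemma cf_q_le_succ w k : irrational w -> (cf_q w k <= cf_q w (S k))%Z.
Proof.
  intros H; rewrite cf_q_S.
  pose proof (cf_a_pos w k H); pose proof (cf_qpair_bounds w k H); nia.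
Qed.

Lemma cf_q_fibonacci w k : irrational w ->
  (cf_q w (S k) + cf_q w k <= cf_q w (S (S k)))%Z.
Proof.
  intros H; rewrite cf_q_SS.
  pose proof (cf_a_pos w (S k) H); pose proof (cf_q_pos w (S k) H); nia.
Qed.

Lemma cf_q_lt_succ w k : irrational w -> (cf_q w (S k) < cf_q w (S (S k)))%Z.
Proof.
  intros H; pose proof (cf_q_fibonacci w k H); pose proof (cf_q_pos w k H); lia.
Qed.

Lemma cf_q_ge_index w k : irrational w -> (Z.of_nat k <= cf_q w k)%Z.
Proof.
  intros H.
  enough (Hpair : forall n,
    (Z.of_nat n <= cf_q w n /\ Z.of_nat (S n) <= cf_q w (S n))%Z) by apply Hpair.
  intros n; induction n as [| n IH].
  - pose proof (cf_q_le_succ w 0 H); change (cf_q w 0) with 1%Z in *; simpl; lia.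
  - split; [apply IH |].
    pose proof (cf_q_fibonacci w n H); pose proof (cf_q_pos w n H); lia.
Qed.

Lemma cf_q_monotone w j k : irrational w -> (j <= k)%nat -> (cf_q w j <= cf_q w k)%Z.
Proof.
  intros H Hjk; induction Hjk as [| k _ IH]; [lia |].
  pose proof (cf_q_le_succ w k H); lia.
Qed.

(* The partial sums satisfy the stronger, inductive bound
   sum_{j<=n} 1/q_j + 2/q_n + 2/q_{n+1} <= 5, by q_{n+2} >= q_{n+1} + q_n. *)
Lemma sum_inv_cf_q_le w n : irrational w -> sum_f_R0 (fun j => / qR w j) n <= 5.
Proof.
  intros H.
  enough (Hinv : sum_f_R0 (fun j => / qR w j) n + 2 / qR w n + 2 / qR w (S n) <= 5).
  { pose proof (cf_qR_ge1 w n H); pose proof (cf_qR_ge1 w (S n) H).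
    assert (0 < 2 / qR w n) by (apply Rdiv_lt_0_compat; lra).
    assert (0 < 2 / qR w (S n)) by (apply Rdiv_lt_0_compat; lra).
    lra. }
  induction n as [| n IH].
  - pose proof (cf_qR_ge1 w 1 H).
    assert (/ qR w 1 <= 1) by (rewrite <- Rinv_1; apply Rinv_le_contravar; lra).
    simpl sum_f_R0; change (cf_q w 0) with 1%Z; rewrite Rinv_1; unfold Rdiv; lra.
  - simpl.
    pose proof (cf_qR_ge1 w n H) as Hx.
    assert (Hy : qR w n <= qR w (S n)) by apply IZR_le, cf_q_le_succ, H.
    assert (Hz : qR w (S n) + qR w n <= qR w (S (S n))).
    { rewrite <- plus_IZR; apply IZR_le, cf_q_fibonacci, H. }
    set (x := qR w n) in *; set (y := qR w (S n)) in *; set (z := qR w (S (S n))) in *.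
    assert (2 / z <= 2 / (x + y)).
    { apply Rmult_le_compat_l; [lra | apply Rinv_le_contravar; lra]. }
    assert (/ y + 2 / (x + y) <= 2 / x).
    { apply Rmult_le_reg_r with (x * y * (x + y)); [apply Rmult_lt_0_compat; nra |].
      replace ((/ y + 2 / (x + y)) * (x * y * (x + y))) with (x * (x + y) + 2 * x * y)
        by (field; lra).
      replace (2 / x * (x * y * (x + y))) with (2 * y * (x + y)) by (field; lra).
      nra. }
    lra.
Qed.

(** * The Bruno condition as a growth condition *)

Definition bruno_term w j := ln (qR w (S j)) / qR w j.

Lemma bruno_term_nonneg w j : irrational w -> 0 <= bruno_term w j.
Proof.
  intros H; pose proof (cf_qR_ge1 w j H).
  apply Rmult_le_pos; [apply ln_nonneg, cf_qR_ge1, H | apply Rlt_le, Rinv_0_lt_compat; lra].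
Qed.

Lemma bruno_sum_nonneg w K : irrational w -> 0 <= bruno_sum w K.
Proof. intros H; apply cond_pos_sum; intros; apply bruno_term_nonneg, H. Qed.

Lemma bruno_term_le_sum w k K : irrational w -> (k <= K)%nat ->
  bruno_term w k <= bruno_sum w K.
Proof.
  intros H Hk; induction Hk as [| K _ IH].
  - destruct k as [| k]; [apply Rle_refl |].
    change (bruno_term w (S k) <= bruno_sum w k + bruno_term w (S k)).
    pose proof (bruno_sum_nonneg w k H); lra.
  - change (bruno_term w k <= bruno_sum w K + bruno_term w (S K)).
    pose proof (bruno_term_nonneg w (S K) H); lra.
Qed.

Definition cf_log_growth w := exists s C K, 0 <= s /\ 0 <= C /\
  forall k, (K <= k)%nat -> ln (qR w (S k)) <= qR w k * (s * ln (qR w k) + C).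

Lemma bruno_cond_log_growth s w :
  irrational w -> 0 <= s -> bruno_cond s w -> cf_log_growth w.
Proof.
  intros H Hs [C [N0 HB]].
  exists s, (Rmax C 0), (S N0); split; [exact Hs | split; [apply Rmax_r |]].
  intros [| k] Hk; [lia |].
  set (N := Z.to_nat (cf_q w (S k))).
  assert (HN : INR N = qR w (S k)).
  { unfold N; rewrite INR_IZR_INZ, Z2Nat.id; [reflexivity |].
    pose proof (cf_q_pos w (S k) H); lia. }
  assert (HN0 : (N0 <= N)%nat).
  { unfold N; pose proof (cf_q_ge_index w (S k) H); lia. }
  assert (HNk : qR w (S k) <= INR N < qR w (S (S k))).
  { rewrite HN; split; [lra | apply IZR_lt, cf_q_lt_succ, H]. }
  pose proof (HB N (S k) HN0 HNk) as Hsum; rewrite HN in Hsum.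
  pose proof (bruno_term_le_sum w (S k) (S k) H (le_n _)) as Hlast.
  pose proof (Rmax_l C 0); pose proof (cf_qR_ge1 w (S k) H).
  apply Rdiv_le_iff; [lra |]; unfold bruno_term in Hlast; lra.
Qed.

Lemma log_growth_bruno_term_bound w : irrational w -> cf_log_growth w ->
  exists s C, 0 <= s /\ forall k, bruno_term w k <= s * ln (qR w k) + C.
Proof.
  intros H [s [C [K [Hs [HC HG]]]]].
  exists s, (C + bruno_sum w K); split; [exact Hs |]; intros k.
  pose proof (bruno_sum_nonneg w K H); pose proof (cf_qR_ge1 w k H).
  assert (0 <= s * ln (qR w k)) by (apply Rmult_le_pos; [| apply ln_nonneg]; lra).
  destruct (le_lt_dec K k) as [HKk | HkK].
  - enough (bruno_term w k <= s * ln (qR w k) + C) by lra.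
    apply Rdiv_le_iff; [lra | apply HG, HKk].
  - pose proof (bruno_term_le_sum w k K H (Nat.lt_le_incl _ _ HkK)); lra.
Qed.

(* Terms with q_{j+1} <= x are at most ln x / q_j. *)
Lemma bruno_sum_le_ln w k x : irrational w -> qR w (S k) <= x ->
  bruno_sum w k <= 5 * ln x.
Proof.
  intros H Hx.
  apply Rle_trans with (sum_f_R0 (fun j => / qR w j * ln x) k).
  - apply sum_Rle; intros j Hj.
    pose proof (cf_qR_ge1 w j H); pose proof (cf_qR_ge1 w (S j) H).
    rewrite Rmult_comm; apply Rmult_le_compat_r.
    + apply Rlt_le, Rinv_0_lt_compat; lra.
    + apply ln_le; [lra |].
      apply Rle_trans with (qR w (S k)); [apply IZR_le, cf_q_monotone; [exact H | lia] | exact Hx].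
  - rewrite <- scal_sum.
    pose proof (sum_inv_cf_q_le w k H); pose proof (cf_qR_ge1 w (S k) H).
    assert (0 <= ln x) by (apply ln_nonneg; lra).
    nra.
Qed.

Lemma log_growth_bruno_cond w : irrational w -> cf_log_growth w ->
  exists s, 0 < s /\ bruno_cond s w.
Proof.
  intros H HG.
  destruct (log_growth_bruno_term_bound w H HG) as [s [C [Hs Hterm]]].
  exists (s + 5); split; [lra |]; exists C, 0%nat.
  intros N k _ [HkN HNk].
  pose proof (cf_qR_ge1 w k H).
  assert (Hln : ln (qR w k) <= ln (INR N)) by (apply ln_le; lra).
  assert (0 <= ln (INR N)) by (apply ln_nonneg; lra).
  assert (s * ln (qR w k) <= s * ln (INR N)) by (apply Rmult_le_compat_l; lra).
  pose proof (Hterm k).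
  destruct k as [| k].
  - change (bruno_term w 0 - (s + 5) * ln (INR N) <= C); lra.
  - change (bruno_sum w k + bruno_term w (S k) - (s + 5) * ln (INR N) <= C).
    pose proof (bruno_sum_le_ln w k (INR N) H HkN); lra.
Qed.

Lemma in_B_iff_log_growth w : in_B w <-> irrational w /\ cf_log_growth w.
Proof.
  split.
  - intros [s [Hs [H HB]]]; split; [exact H |].
    apply (bruno_cond_log_growth s w H); [lra | exact HB].
  - intros [H HG]; destruct (log_growth_bruno_cond w H HG) as [s [Hs HB]].
    exists s; repeat split; assumption.
Qed.

(** * Numbers with the same continued fraction tail *)

Definition same_tail w w' := exists i j, cf_rem w i = cf_rem w' j.

Lemma cf_rem_shift w w' i j : cf_rem w i = cf_rem w' j ->
  forall t, cf_rem w (i + t) = cf_rem w' (j + t).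
Proof.
  intros E t; induction t as [| t IH]; [rewrite !Nat.add_0_r; exact E |].
  rewrite !Nat.add_succ_r; simpl; rewrite IH; reflexivity.
Qed.

Lemma cf_q_same_tail_le w w' i j : irrational w -> irrational w' ->
  cf_rem w i = cf_rem w' j ->
  forall t, (cf_q w' (j + t) <= (cf_q w' j * cf_q w' (S j)) * cf_q w (i + t))%Z.
Proof.
  intros H H' E.
  set (M := (cf_q w' j * cf_q w' (S j))%Z).
  enough (Hpair : forall t, (cf_q w' (j + t) <= M * cf_q w (i + t) /\
                    cf_q w' (S (j + t)) <= M * cf_q w (S (i + t)))%Z)
    by (intros t; apply Hpair).
  induction t as [| t [IH1 IH2]].
  - rewrite !Nat.add_0_r; unfold M.
    pose proof (cf_q_pos w' j H'); pose proof (cf_q_pos w' (S j) H').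
    pose proof (cf_q_pos w i H); pose proof (cf_q_pos w (S i) H).
    assert (1 <= cf_q w' (S j) * cf_q w i)%Z by nia.
    assert (1 <= cf_q w' j * cf_q w (S i))%Z by nia.
    split; nia.
  - rewrite !Nat.add_succ_r; split; [exact IH2 |]; rewrite !cf_q_SS.
    assert (Ea : cf_a w' (S (S (j + t))) = cf_a w (S (S (i + t)))).
    { change (Int_part (/ cf_rem w' (S (j + t))) = Int_part (/ cf_rem w (S (i + t)))).
      rewrite <- !Nat.add_succ_r, (cf_rem_shift w w' i j E (S t)); reflexivity. }
    rewrite Ea; pose proof (cf_a_pos w (S (i + t)) H); nia.
Qed.

Lemma cf_q_same_tail_comparable w w' : irrational w -> irrational w' -> same_tail w w' ->
  exists i j M, 1 <= M /\ forall t,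
    qR w' (j + t) <= M * qR w (i + t) /\ qR w (i + t) <= M * qR w' (j + t).
Proof.
  intros H H' [i [j E]].
  set (M1 := (cf_q w' j * cf_q w' (S j))%Z); set (M2 := (cf_q w i * cf_q w (S i))%Z).
  pose proof (cf_q_same_tail_le w w' i j H H' E) as H1.
  pose proof (cf_q_same_tail_le w' w j i H' H (eq_sym E)) as H2.
  fold M1 in H1; fold M2 in H2.
  assert (1 <= M1)%Z by (pose proof (cf_q_pos w' j H'); pose proof (cf_q_pos w' (S j) H'); nia).
  assert (1 <= M2)%Z by (pose proof (cf_q_pos w i H); pose proof (cf_q_pos w (S i) H); nia).
  exists i, j, (IZR (M1 * M2)); split; [apply IZR_le; nia |].
  intros t; rewrite <- !mult_IZR; split; apply IZR_le.
  - pose proof (H1 t); pose proof (cf_q_pos w (i + t) H); nia.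
  - pose proof (H2 t); pose proof (cf_q_pos w' (j + t) H'); nia.
Qed.

Lemma ln_growth_bound_transfer M s C x y Y Y' :
  1 <= M -> 0 <= s -> 0 <= C -> 1 <= x -> 1 <= y -> 1 <= Y -> 1 <= Y' ->
  Y' <= M * Y -> x <= M * y -> ln Y <= x * (s * ln x + C) ->
  ln Y' <= y * ((M * s) * ln y + (ln M + M * s * ln M + M * C)).
Proof.
  intros HM Hs HC Hx Hy HY HY' HYY HxM Hgrowth.
  pose proof (ln_nonneg M HM); pose proof (ln_nonneg x Hx); pose proof (ln_nonneg y Hy).
  assert (HlnY : ln Y' <= ln M + ln Y) by (rewrite <- ln_mult by lra; apply ln_le; lra).
  assert (Hlnx : ln x <= ln M + ln y) by (rewrite <- ln_mult by lra; apply ln_le; lra).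
  assert (x * (s * ln x + C) <= (M * y) * (s * (ln M + ln y) + C))
    by (apply Rmult_le_compat; nra).
  assert (ln M <= y * ln M) by nra.
  nra.
Qed.

Lemma cf_log_growth_same_tail w w' : irrational w -> irrational w' -> same_tail w w' ->
  cf_log_growth w -> cf_log_growth w'.
Proof.
  intros H H' Ht [s [C [K [Hs [HC HG]]]]].
  destruct (cf_q_same_tail_comparable w w' H H' Ht) as [i [j [M [HM HQ]]]].
  pose proof (ln_nonneg M HM).
  exists (M * s), (ln M + M * s * ln M + M * C), (j + K)%nat.
  split; [nra | split; [pose proof (Rmult_le_pos (M * s) (ln M)); nra |]].
  intros k Hk; replace k with (j + (k - j))%nat by lia; set (t := (k - j)%nat).
  destruct (HQ (S t)) as [HY _]; rewrite !Nat.add_succ_r in HY.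
  destruct (HQ t) as [_ Hx].
  apply (ln_growth_bound_transfer M s C (qR w (i + t)) _ (qR w (S (i + t))));
    try apply cf_qR_ge1; try assumption.
  apply HG; lia.
Qed.

Lemma in_B_irrational w : in_B w -> irrational w.
Proof. intros [s [_ [H _]]]; exact H. Qed.

Lemma in_B_same_tail w w' : in_B w -> irrational w' -> same_tail w w' -> in_B w'.
Proof.
  rewrite !in_B_iff_log_growth; intros [H HG] H' Ht.
  split; [exact H' | exact (cf_log_growth_same_tail w w' H H' Ht HG)].
Qed.

Lemma same_tail_sym w w' : same_tail w w' -> same_tail w' w.
Proof. intros [i [j E]]; exists j, i; symmetry; exact E. Qed.

Lemma same_tail_trans w1 w2 w3 : same_tail w1 w2 -> same_tail w2 w3 -> same_tail w1 w3.
Proof.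
  intros [i [j E12]] [j' [l E23]]; destruct (le_lt_dec j j') as [Hj | Hj].
  - exists (i + (j' - j))%nat, l.
    rewrite (cf_rem_shift _ _ _ _ E12); replace (j + (j' - j))%nat with j' by lia; exact E23.
  - exists i, (l + (j - j'))%nat.
    rewrite E12, <- (cf_rem_shift _ _ _ _ E23); replace (j' + (j - j'))%nat with j by lia.
    reflexivity.
Qed.

Lemma same_tail_add_IZR w n : same_tail w (w + IZR n).
Proof. exists 0%nat, 0%nat; simpl; rewrite frac_part_add_IZR; reflexivity. Qed.

(* With x_0 = 1/(a_1 + x_1), the Gauss map sends 1 - x_0 to x_1 when
   a_1 = 1, and to 1/(a_1 - 1 + x_1), then to x_1, when a_1 >= 2. *)
Lemma same_tail_opp x : irrational x -> same_tail x (- x).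
Proof.
  intros H.
  destruct (cf_rem_bounds x 0 H) as [y0 y1]; destruct (cf_rem_bounds x 1 H) as [z0 z1].
  set (y := cf_rem x 0) in *; set (z := cf_rem x 1) in *; set (a := cf_a x 1).
  assert (Hopp : cf_rem (- x) 0 = 1 - y).
  { assert (Hy0 : y = x - IZR (Int_part x)) by reflexivity.
    destruct (base_Int_part x).
    cbn [cf_rem]; rewrite (frac_part_shift (- x) (- Int_part x - 1));
      rewrite !minus_IZR, !opp_IZR; lra. }
  assert (Hy : y = / (IZR a + z)).
  { unfold z, a; cbn; rewrite <- Rplus_Int_part_frac_part, Rinv_inv; reflexivity. }
  pose proof (cf_a_pos x 0 H) as Ha.
  destruct (Z.eq_dec a 1) as [Ea | Ea].
  - exists 2%nat, 1%nat.
    change (frac_part (/ z) = frac_part (/ cf_rem (- x) 0)).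
    rewrite Hopp, Hy, Ea.
    replace (/ (1 - / (IZR 1 + z))) with (/ z + IZR 1) by (simpl; field; split; lra).
    rewrite frac_part_add_IZR; reflexivity.
  - assert (Ha2 : 2 <= IZR a) by (apply IZR_le; fold a in Ha; lia).
    assert (Hrem1 : cf_rem (- x) 1 = / (IZR (a - 1) + z)).
    { change (frac_part (/ cf_rem (- x) 0) = / (IZR (a - 1) + z)).
      rewrite Hopp, Hy, minus_IZR.
      assert (0 < / (IZR a - 1 + z) < 1).
      { split; [apply Rinv_0_lt_compat; lra |].
        rewrite <- Rinv_1; apply Rinv_lt_contravar; lra. }
      rewrite (frac_part_shift _ 1); simpl.
      - field; split; lra.
      - replace (/ (1 - / (IZR a + z))) with (1 + / (IZR a - 1 + z)) by (field; split; lra).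
        lra. }
    exists 1%nat, 2%nat.
    change (z = frac_part (/ cf_rem (- x) 1)).
    rewrite Hrem1, Rinv_inv, Rplus_comm, frac_part_add_IZR, frac_part_id; lra.
Qed.

Lemma same_tail_inv_unit y : 0 < y < 1 -> same_tail y (/ y).
Proof. intros H; exists 1%nat, 0%nat; simpl; rewrite (frac_part_id y ltac:(lra)); reflexivity. Qed.

Lemma same_tail_inv_pos x : irrational x -> 0 < x -> same_tail x (/ x).
Proof.
  intros H Hx; destruct (Rlt_le_dec x 1) as [Hx1 | Hx1]; [apply same_tail_inv_unit; lra |].
  assert (x <> 1) by (intros ->; apply H; exists 1%Z, 1%Z; split; [lia | simpl; field]).
  apply same_tail_sym; rewrite <- (Rinv_inv x) at 2; apply same_tail_inv_unit.
  split; [apply Rinv_0_lt_compat; lra | rewrite <- Rinv_1; apply Rinv_lt_contravar; lra].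
Qed.

Lemma same_tail_inv x : irrational x -> same_tail x (/ x).
Proof.
  intros H; destruct (Rlt_le_dec 0 x) as [Hx | Hx]; [apply same_tail_inv_pos; assumption |].
  pose proof (irrational_neq0 x H).
  apply same_tail_trans with (- x); [apply same_tail_opp, H |].
  apply same_tail_trans with (/ - x); [apply same_tail_inv_pos; [apply irrational_opp, H | lra] |].
  rewrite Rinv_opp; apply same_tail_sym, same_tail_opp, irrational_inv, H.
Qed.

Lemma in_B_add_IZR w n : in_B w -> in_B (w + IZR n).
Proof.
  intros H; apply (in_B_same_tail w); [exact H | | apply same_tail_add_IZR].
  apply irrational_add_IZR, in_B_irrational, H.
Qed.

Lemma in_B_opp w : in_B w -> in_B (- w).
Proof.
  intros H; pose proof (in_B_irrational w H).
  apply (in_B_same_tail w); [exact H | apply irrational_opp | apply same_tail_opp]; assumption.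
Qed.

Lemma in_B_inv w : in_B w -> in_B (/ w).
Proof.
  intros H; pose proof (in_B_irrational w H).
  apply (in_B_same_tail w); [exact H | apply irrational_inv | apply same_tail_inv]; assumption.
Qed.

(** * Invariance under PSL(2,Z) *)

Section Moebius_invariance.

Variable P : R -> Prop.
Hypothesis P_irrational : forall x, P x -> irrational x.
Hypothesis P_add_IZR : forall x n, P x -> P (x + IZR n).
Hypothesis P_opp : forall x, P x -> P (- x).
Hypothesis P_inv : forall x, P x -> P (/ x).

Lemma moebius_invariant a b c d : (a * d - b * c)%Z = 1%Z ->
  forall w, P w -> P ((IZR a * w + IZR b) / (IZR c * w + IZR d)).
Proof.
  intros Hdet w Hw; pose proof (P_irrational w Hw) as Hirr.
  remember (Z.abs_nat c) as n eqn:Hn; revert a b c d Hn Hdet.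
  induction n as [n IH] using lt_wf_ind; intros a b c d Hn Hdet.
  destruct (Z.eq_dec c 0) as [-> | Hc].
  - destruct (Z.mul_eq_1 a d ltac:(lia)) as [-> | ->].
    + replace d with 1%Z by lia.
      replace (_ / _) with (w + IZR b) by (simpl; field); apply P_add_IZR, Hw.
    + replace d with (-1)%Z by lia.
      replace (_ / _) with (w + IZR (- b)) by (rewrite opp_IZR; simpl; field).
      apply P_add_IZR, Hw.
  - set (q := (a ÷ c)%Z); set (a' := Z.rem a c); set (b' := (b - q * d)%Z).
    assert (Ea : a = (c * q + a')%Z) by apply (Z.quot_rem a c Hc).
    assert (Eb : b = (b' + q * d)%Z) by (unfold b'; lia).
    assert (Ha' : (Z.abs_nat a' < n)%nat) by (pose proof (Z.rem_bound_abs a c Hc); lia).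
    assert (Hdet' : (- c * b' - - d * a')%Z = 1%Z) by (rewrite Ea, Eb in Hdet; lia).
    pose proof (IH _ Ha' (- c)%Z (- d)%Z a' b' eq_refl Hdet') as Hstep.
    pose proof (affine_IZR_neq0 w c d Hirr ltac:(lia)) as Hden.
    pose proof (affine_IZR_neq0 w a' b' Hirr ltac:(lia)) as Hden'.
    replace ((IZR a * w + IZR b) / (IZR c * w + IZR d))
      with (- / ((IZR (- c) * w + IZR (- d)) / (IZR a' * w + IZR b')) + IZR q).
    + apply P_add_IZR, P_opp, P_inv, Hstep.
    + rewrite Ea, Eb, !plus_IZR, !opp_IZR, !mult_IZR; field.
      split; [| split]; try assumption; intros E; apply Hden; lra.
Qed.

End Moebius_invariance.

Theorem mainTheorem7 : forall (a b c d : Z), (a * d - b * c)%Z = 1%Z ->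
  forall w : R, in_B w ->
  in_B ((IZR a * w + IZR b) / (IZR c * w + IZR d)).
Proof.
  exact (moebius_invariant in_B in_B_irrational in_B_add_IZR in_B_opp in_B_inv).
Qed.
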